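(* For $D \in \mathbb{R}^{m\times n}$ and $Q \in \mathbb{Z}^{m\times n}$ whose $j$th column stores the sorting of the $j$th column of $D$, the call QuickLexSortAllSeq$(D,Q,(),\mathbf{0})$ (empty sequence, zero vector of length $m$) has running time $O\!\left(m \sum_{i=1}^n m \frac{n!}{(n-i)!}\right)$ and space requirements $O(mn)$.
   Context: ''The $j$th column of $Q$ stores the sorting of the $j$th column of $D$'' means $(Q_{0j},\ldots,Q_{m-1,j})$ is a permutation of $\{0,\ldots,m-1\}$ with $D_{Q_{0j},j} \le \cdots \le D_{Q_{m-1,j},j}$. Model: unit-cost random access machine; outputting a vector of length $m$ costs $O(m)$; space includes the inputs. QuickLexSortRefine$(D,Q,i,L)$: initialize integer arrays $\mathrm{IDval},\mathrm{IDvalInit},\mathrm{subID},\mathrm{newCount},\mathrm{numNewID}$ of length $m$ to zero. For $j=0,\ldots,m-1$: let $r := Q[j,i]$, $\ell := L[r]$; if $\mathrm{IDvalInit}[\ell]=0$, set $\mathrm{IDvalInit}[\ell]:=1$, $\mathrm{IDval}[\ell]:=D[r,i]$; otherwise if $\mathrm{IDval}[\ell]\neq D[r,i]$, set $\mathrm{IDval}[\ell]:=D[r,i]$ and increment $\mathrm{newCount}[\ell]$; then set $\mathrm{subID}[r]:=\mathrm{newCount}[\ell]$. Set $\mathrm{numNewID}[m-1]:=\sum_{j=0}^{m-2}\mathrm{newCount}[j]$ and for $j=m-2,\ldots,1$, $\mathrm{numNewID}[j]:=\mathrm{numNewID}[j+1]-\mathrm{newCount}[j]$. Return $L'$ with $L'[j]:=L[j]+\mathrm{numNewID}[L[j]]+\mathrm{subID}[j]$.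 QuickLexSortAllSeq$(D,Q,(a_1,\ldots,a_p),L)$ (recursive): for each $i \in \{0,\ldots,n-1\}\setminus\{a_1,\ldots,a_p\}$: set $L' :=$ QuickLexSortRefine$(D,Q,i,L)$, output $L'$, and call QuickLexSortAllSeq$(D,Q,(a_1,\ldots,a_p,i),L')$. *)

From HB Require Import structures.
From mathcomp Require Import all_boot all_order all_algebra.
From mathcomp Require Import reals.
Set Implicit Arguments. Unset Strict Implicit. Unset Printing Implicit Defensive.
Import Order.TTheory GRing.Theory Num.Theory.
Local Open Scope ring_scope.

(* Cost model: an instrumented functional implementation of the pseudocode.
   Every primitive statement on the unit-cost RAM is charged explicitly;
   functions return (result, running time) or (result, time, peak space). *)

Section Algo.
Variables (R : realType) (m n : nat) (D : 'M[R]_(m, n)) (Q : 'M[nat]_(m, n)).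

(* entry access with nat indices (out-of-range entries are never read) *)
Definition Dget (r i : nat) : R :=
  match insub r, insub i with
  | Some r', Some i' => D r' i'
  | _, _ => 0
  end.
Definition Qget (j i : nat) : nat :=
  match insub j, insub i with
  | Some j', Some i' => Q j' i'
  | _, _ => 0%N
  end.

Record rstate := RS { idval : seq R; idinit : seq bool; subid : seq nat;
                      newc : seq nat }.

Definition refine_iter (i : nat) (L : seq nat) (sc : rstate * nat) (j : nat)
  : rstate * nat :=
  let: (s, c) := sc in
  let r := Qget j i in
  let l := nth 0%N L r in
  let d := Dget r i in
  if ~~ nth false (idinit s) l then
    (RS (set_nth 0 (idval s) l d) (set_nth false (idinit s) l true)
        (set_nth 0%N (subid s) r (nth 0%N (newc s) l)) (newc s), (c + 7)%N)
  else if nth 0 (idval s) l != d then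
    (RS (set_nth 0 (idval s) l d) (idinit s)
        (set_nth 0%N (subid s) r (nth 0%N (newc s) l).+1)
        (set_nth 0%N (newc s) l (nth 0%N (newc s) l).+1), (c + 10)%N)
  else
    (RS (idval s) (idinit s) (set_nth 0%N (subid s) r (nth 0%N (newc s) l))
        (newc s), (c + 6)%N).

(* QuickLexSortRefine(D,Q,i,L): returns (L', time, peak working space) *)
Definition refine (i : nat) (L : seq nat) : seq nat * nat * nat :=
  let s0 := RS (nseq m 0) (nseq m false) (nseq m 0%N) (nseq m 0%N) in
  let: (s, tloop) := foldl (refine_iter i L) (s0, (5 * m)%N) (iota 0 m) in
  let nc := newc s in
  let nn0 := set_nth 0%N (nseq m 0%N) m.-1 (sumn (take m.-1 nc)) in
  let nn := foldl (fun a j => set_nth 0%N a j (nth 0%N a j.+1 - nth 0%N nc j)%N)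
                  nn0 (rev (iota 1 (m.-2))) in
  let L' := [seq (nth 0%N L j + nth 0%N nn (nth 0%N L j) + nth 0%N (subid s) j)%N
            | j <- iota 0 m] in
  let t := (tloop + m + 2 * m + 5 * m)%N in
  (L', t, (6 * m + 3)%N).

(* QuickLexSortAllSeq(D,Q,used,L) with fuel k (= n - size used):
   returns (running time, peak space used by this call and its descendants,
   beyond the inputs).  The loop over the complement of [used] is charged
   one unit per enumerated index (complement kept as a linked list), each
   output of L' costs m, the frame keeps L' (m cells) while the recursive
   call runs. *)
Fixpoint allseq (k : nat) (used : seq nat) (L : seq nat) : nat * nat :=
  match k with
  | 0 => (1%N, 1%N)
  | k'.+1 =>
    foldl (fun ts i =>
             let: (t, sp) := ts in
             let: (L', tr, sr) := refine i L in
             let: (tc, sc) := allseq k' (rcons used i) L' in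
             ((t + 1 + tr + m + tc)%N, maxn sp (maxn sr (m + sc).+1)))
          (1%N, 1%N) [seq i <- iota 0 n | i \notin used]
  end.

Definition quickLexSortAllSeq_time : nat :=
  (allseq n [::] (nseq m 0%N)).1.

(* space: inputs D, Q (2mn cells), the zero vector L (m cells), the shared
   index stack (a_1..a_p) and complement list (2n cells), plus peak
   working space of the recursion *)
Definition quickLexSortAllSeq_space : nat :=
  (2 * m * n + m + 2 * n + (allseq n [::] (nseq m 0%N)).2)%N.

Definition stores_sorting : Prop :=
  forall j : 'I_n,
    perm_eq [seq Q k j | k <- enum 'I_m] (iota 0 m) /\
    sorted (fun a b => Dget a j <= Dget b j) [seq Q k j | k <- enum 'I_m].

End Algo.

From HB Require Import structures.
From mathcomp Require Import all_boot all_order all_algebra.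
From mathcomp Require Import reals.
From mathcomp Require Import zify.
Import Order.TTheory GRing.Theory Num.Theory.
Set Implicit Arguments. Unset Strict Implicit. Unset Printing Implicit Defensive.

(* The recursion tree of QuickLexSortAllSeq(D,Q,(),0) has one node for every
   sequence of distinct column indices, i.e. arrangements n = sum_i n!/(n-i)!
   nodes, and every edge costs O(m): one call of QuickLexSortRefine plus one
   output of length m.  Along any root-to-leaf path at most n frames are
   alive, each keeping one vector of length m, and QuickLexSortRefine works in
   O(m) space, so the peak space is O(mn). *)

Fixpoint arrangements (k : nat) : nat :=
  if k is k'.+1 then (1 + k'.+1 * arrangements k')%N else 1%N.

Lemma arrangementsE k : arrangements k = (1 + \sum_(1 <= i < k.+1) k ^_ i)%N.
Proof.
elim: k => [|k IH]; first by rewrite big_geq.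
rewrite /= IH big_add1 /= mulnDr muln1 big_distrr /= big_nat_recl //= ffactn1.
by rewrite big_add1; congr (1 + (_ + _))%N; apply: eq_bigr => i _; rewrite ffactSS.
Qed.

Lemma arrangements_gt0 k : (0 < arrangements k)%N.
Proof. by case: k. Qed.

Lemma foldl_cost_le (S : Type) (A : eqType) (w : S -> nat) (f : S -> A -> S)
    (xs : seq A) (p : S) (B : nat) :
  {in xs, forall a q, w (f q a) <= w q + B}%N ->
  (w (foldl f p xs) <= w p + size xs * B)%N.
Proof.
elim: xs p => [|x xs IH] p step /=; first by rewrite addn0.
apply: leq_trans (IH _ _) _; first by move=> a xs_a; apply: step; rewrite inE xs_a orbT.
by rewrite mulSn addnA leq_add2r step ?mem_head.
Qed.

Lemma foldl_maxn_le (S A : Type) (w : S -> nat) (f : S -> A -> S)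
    (xs : seq A) (p : S) (B : nat) :
  (forall q a, w (f q a) <= maxn (w q) B)%N -> (w (foldl f p xs) <= maxn (w p) B)%N.
Proof.
move=> step; elim: xs p => [|x xs IH] p /=; first exact: leq_maxl.
apply: leq_trans (IH _) _; rewrite geq_max leq_maxr andbT.
by apply: leq_trans (step _ _) _; rewrite geq_max leq_maxl leq_maxr.
Qed.

Lemma size_filter_notin_iota n (s : seq nat) :
  uniq s -> all (gtn n) s -> size [seq i <- iota 0 n | i \notin s] = (n - size s)%N.
Proof.
move=> s_uniq s_lt.
have perm_in : perm_eq [seq i <- iota 0 n | i \in s] s.
  apply: uniq_perm; rewrite ?filter_uniq ?iota_uniq // => x.
  by rewrite mem_filter mem_iota andb_idr // => /(allP s_lt).
have := count_predC (mem s) (iota 0 n).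
rewrite size_iota -!size_filter (perm_size perm_in).
by move=> size_n; rewrite -[in RHS]size_n addKn.
Qed.

Section Bounds.
Variables (R : realType) (m n : nat) (D : 'M[R]_(m, n)) (Q : 'M[nat]_(m, n)).

Lemma refine_iter_time i L sc j : ((refine_iter D Q i L sc j).2 <= sc.2 + 10)%N.
Proof.
by case: sc => s c; rewrite /refine_iter; case: ifP => _; [|case: ifP => _];
  rewrite /= leq_add2l.
Qed.

Lemma refine_time i L : ((refine D Q i L).1.2 <= 23 * m)%N.
Proof.
rewrite /refine.
set s0 := RS _ _ _ _.
have := @foldl_cost_le _ _ snd _ (iota 0 m) (s0, 5 * m)%N 10
  (fun j _ sc => refine_iter_time i L sc j).
by case: foldl => s t /=; rewrite size_iota; lia.
Qed.

Lemma refine_space i L : (refine D Q i L).2 = (6 * m + 3)%N.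
Proof. by rewrite /refine; case: foldl. Qed.

(* The extra [25 * m] absorbs the cost of the edge from the parent call. *)
Lemma allseq_time k used L :
  (0 < m)%N -> uniq used -> all (gtn n) used -> (size used + k = n)%N ->
  ((allseq D Q k used L).1 + 25 * m <= 26 * m * arrangements k)%N.
Proof.
move=> m_gt0; elim: k used L => [|k IH] used L used_uniq used_lt used_size /=.
  lia.
set T := (26 * m * arrangements k)%N.
have T_ge : (25 * m <= T)%N by have := arrangements_gt0 k; rewrite /T; nia.
apply: leq_trans (leq_add (@foldl_cost_le _ _ fst _ _ _ (T - m).+1 _) (leqnn _)) _.
  move=> a; rewrite mem_filter mem_iota add0n /= => /andP [a_notin a_lt] [t sp] /=.
  case E: (refine D Q a L) => [[L' tr] sr].
  have := refine_time a L; rewrite E /= => tr_le.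
  have := IH (rcons used a) L'; case: allseq => tc sc /=.
  rewrite rcons_uniq a_notin used_uniq all_rcons /= a_lt used_lt size_rcons.
  have size_a : ((size used).+1 + k = n)%N by lia.
  by move=> /(_ isT isT size_a); rewrite -/T; lia.
rewrite size_filter_notin_iota // (_ : n - size used = k.+1)%N; last by lia.
rewrite /= mulnDr muln1 mulnCA -/T.
have : (k.+1 * (T - m).+1 <= k.+1 * T)%N by rewrite leq_mul2l; lia.
lia.
Qed.

Lemma allseq_space k used L : ((allseq D Q k used L).2 <= 7 * m + 4 + k * (m + 1))%N.
Proof.
elim: k used L => [|k IH] used L /=; first lia.
apply: leq_trans (@foldl_maxn_le _ _ snd _ _ _ (7 * m + 4 + k.+1 * (m + 1)) _) _.
  move=> [t sp] a /=.
  case E: (refine D Q a L) => [[L' tr] sr].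
  have := refine_space a L; rewrite E /= => ->.
  have := IH (rcons used a) L'; case: allseq => tc sc /= sc_le.
  lia.
by rewrite /=; lia.
Qed.

End Bounds.

Theorem mainTheorem6 :
  exists C : nat,
    forall (R : realType) (m n : nat), (0 < m)%N -> (0 < n)%N ->
    forall (D : 'M[R]_(m, n)) (Q : 'M[nat]_(m, n)),
      stores_sorting D Q ->
      (quickLexSortAllSeq_time D Q <= C * (m * \sum_(1 <= i < n.+1) m * n ^_ i))%N /\
      (quickLexSortAllSeq_space D Q <= C * (m * n))%N.
Proof.
(* The cost model does not depend on the contents of [D] and [Q]. *)
exists 100%N => R m n m_gt0 n_gt0 D Q _; split.
  have := allseq_time D Q (used := [::]) (nseq m 0%N) m_gt0 isT isT (add0n n).
  rewrite /quickLexSortAllSeq_time arrangementsE -big_distrr /=.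
  have : (1 <= \sum_(1 <= i < n.+1) n ^_ i)%N by rewrite big_ltn ?ltnS // ffactn1; lia.
  move: (\sum_(1 <= i < n.+1) n ^_ i)%N => S S_ge1.
  nia.
have := allseq_space D Q n [::] (nseq m 0%N).
rewrite /quickLexSortAllSeq_space; nia.
Qed.
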